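(* Let $G$, $P$, $\pi$, $v_{\mathrm{root}}$, $\alpha\in(0,1)$ be as in the context, with $P$ fixed, let $0<\zeta<\frac{1-\alpha}{\alpha}P_{\min}$, $\epsilon>0$, $S=\sum_{a\in\Sigma}(\sum_{e:L(e)=a}P(e))^2$ and $\delta=1-S-\epsilon$. For each prefix length $n'$ let $\mathcal W_{n'}$ be the set of $\zeta$-typical paths defined in the context and let $$P(E_{\mathrm{bad}})=\sum P(\mathbf w)P(\mathbf w'),$$ the sum running over pairs of distinct $\mathbf w,\mathbf w'\in\mathcal W_{n'}$ with $d_H(L(\mathbf w),L(\mathbf w'))/n'<\delta$. Then $$\limsup_{n'\to\infty}\frac{1}{n'}\log P(E_{\mathrm{bad}})\le-\inf_{Q\in A_{\zeta,\delta}}\bigl(2H(P)-H(Q)\bigr)+\mathcal O(\zeta),$$ where the constant in the $\mathcal O$ notation depends only on $P$.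
   Context: $G=(V,E,L)$ is a deterministic, lossless, primitive labeled directed graph over a finite alphabet $\Sigma$; edge $e$ has initial vertex $\sigma(e)$, terminal vertex $\tau(e)$, label $L(e)$. $P$ is a probability mass function on $E$ with $P(e)>0$ for all $e$, stationary: with $\pi(u)=\sum_{e:\sigma(e)=u}P(e)$, $\pi(u)=\sum_{e:\tau(e)=u}P(e)$. Write $p(\tau(e)\mid\sigma(e))=P(e)/\pi(\sigma(e))$. $H(P)=-\sum_eP(e)\log_2\frac{P(e)}{\pi(\sigma(e))}$ and $P_{\min}=\min_eP(e)$. $v_{\mathrm{root}}\in V$ is fixed. $\mathcal W_{n'}$ is the set of paths $\mathbf w=(e_1,\dots,e_{n'})$ in $G$ with $\sigma(e_1)=v_{\mathrm{root}}$ and $|S_{\mathbf w}(e)/n'-P(e)|<\zeta$ for all $e\in E$, where $S_{\mathbf w}(e)=|\{i:e_i=e\}|$; $P(\mathbf w)=\prod_{i=1}^{n'}p(\tau(e_i)\mid\sigma(e_i))$ is the probability that a random walk governed by $P$ from $v_{\mathrm{root}}$ equals $\mathbf w$ (at vertex $u$ the next edge $e$ is chosen with probability $P(e)/\pi(u)$). $d_H$ is Hamming distance between label sequences. (In the paper these prefixes are those of the codewords of $\mathcal C_{\mathrm{pool}}$, and $P(E_{\mathrm{bad}})$ is the mass of bad pairs of codewords.) Product graph $\mathcal G=G\times G$: vertex set $V\times V$, an edge $(e,e')$ from $(\sigma(e),\sigma(e'))$ to $(\tau(e),\tau(e'))$ for each $e,e'\in E$. $\mathcal M_s$ is the set of probability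 measures $Q$ on edges of $\mathcal G$ that are stationary (distribution of initial vertices equals distribution of terminal vertices); $H(Q)=-\sum_{\mathbf e}Q(\mathbf e)\log\frac{Q(\mathbf e)}{Q_1(\sigma(\mathbf e))}$ with $Q_1$ the initial-vertex marginal. $Q_w(e)=\sum_{e'}Q(e,e')$, $Q_{w'}(e')=\sum_eQ(e,e')$, $f(e,e')=\mathbb 1[L(e)\ne L(e')]$, and $A_{\zeta,\delta}=\{Q\in\mathcal M_s:|Q_w(e)-P(e)|<\zeta,\ |Q_{w'}(e)-P(e)|<\zeta\ \forall e\in E,\ \mathbb E_Q[f]\le\delta\}$. *)

From HB Require Import structures.
From mathcomp Require Import all_boot all_order all_algebra.
From mathcomp Require Import all_classical all_reals all_analysis.
Set Implicit Arguments. Unset Strict Implicit. Unset Printing Implicit Defensive.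
Import Order.TTheory GRing.Theory Num.Theory.
Local Open Scope ring_scope.

Section Defs.
Variables (R : realType) (Sigma V E : finType).
Variables (src tgt : E -> V) (lab : E -> Sigma).

Definition log2 (x : R) : R := ln x / ln 2.

Definition elog2 (x : R) : \bar R := if 0 < x then (log2 x)%:E else -oo%E.

Definition is_path (w : seq E) : bool := sorted (fun e f => tgt e == src f) w.

Definition deterministic : Prop :=
  forall e e', src e = src e' -> lab e = lab e' -> e = e'.

Definition lossless : Prop :=
  forall (e0 e0' : E) (w w' : seq E),
    is_path (e0 :: w) -> is_path (e0' :: w') ->
    src e0 = src e0' -> tgt (last e0 w) = tgt (last e0' w') ->
    map lab (e0 :: w) = map lab (e0' :: w') -> e0 :: w = e0' :: w'.

(* G is primitive: some power of its adjacency matrix is positive, i.e. for some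
   length, every vertex is joined to every vertex by a path of that length *)
Definition primitive : Prop :=
  exists k : nat, forall u v : V, exists (e0 : E) (w : seq E),
    size w = k /\ is_path (e0 :: w) /\ src e0 = u /\ tgt (last e0 w) = v.

Variable P : E -> R.

Definition pi (u : V) : R := \sum_(e : E | src e == u) P e.

Definition stationary_pmf : Prop :=
  (forall e, 0 < P e) /\ (\sum_(e : E) P e = 1) /\
  (forall u : V, \sum_(e : E | src e == u) P e = \sum_(e : E | tgt e == u) P e).

Definition condP (e : E) : R := P e / pi (src e).

Definition HP : R := - \sum_(e : E) P e * log2 (P e / pi (src e)).

Definition Pmin : R := \big[Num.min/1]_(e : E) P e.

Definition Scoll : R := \sum_(a : Sigma) (\sum_(e : E | lab e == a) P e) ^+ 2.

Definition typical (vroot : V) (zeta : R) (n : nat) (w : n.-tuple E) : bool :=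
  [&& is_path w,
      (if val w is e :: _ then src e == vroot else true) &
      [forall e : E, `|(count_mem e w)%:R / n%:R - P e| < zeta]].

Definition Pw (w : seq E) : R := \prod_(e <- w) condP e.

Definition dH (n : nat) (w w' : n.-tuple E) : nat :=
  \sum_(i < n) (lab (tnth w i) != lab (tnth w' i)).

Definition PEbad (vroot : V) (zeta delta : R) (n : nat) : R :=
  \sum_(w : n.-tuple E | typical vroot zeta w)
    \sum_(w' : n.-tuple E | [&& typical vroot zeta w', w' != w &
                               (dH w w')%:R / n%:R < delta])
      Pw w * Pw w'.

(* measures on the edges of the product graph G x G *)
Definition Q1 (Q : E * E -> R) (uu : V * V) : R :=
  \sum_(p : E * E | (src p.1, src p.2) == uu) Q p.

Definition Qin (Q : E * E -> R) (uu : V * V) : R :=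
  \sum_(p : E * E | (tgt p.1, tgt p.2) == uu) Q p.

Definition Ms (Q : E * E -> R) : Prop :=
  (forall p, 0 <= Q p) /\ (\sum_(p : E * E) Q p = 1) /\
  (forall uu : V * V, Q1 Q uu = Qin Q uu).

Definition HQ (Q : E * E -> R) : R :=
  - \sum_(p : E * E)
      (if Q p == 0 then 0 else Q p * log2 (Q p / Q1 Q (src p.1, src p.2))).

Definition Qw (Q : E * E -> R) (e : E) : R := \sum_(e' : E) Q (e, e').
Definition Qw' (Q : E * E -> R) (e' : E) : R := \sum_(e : E) Q (e, e').

Definition EQf (Q : E * E -> R) : R :=
  \sum_(p : E * E) Q p * (lab p.1 != lab p.2)%:R.

Definition A_set (zeta delta : R) : set (E * E -> R) :=
  [set Q | Ms Q /\
     (forall e, `|Qw Q e - P e| < zeta /\ `|Qw' Q e - P e| < zeta) /\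
     EQf Q <= delta].

End Defs.

From Pilot Require Import Defs.
From HB Require Import structures.
From mathcomp Require Import all_boot all_order all_algebra.
From mathcomp Require Import all_classical all_reals all_analysis.
From mathcomp Require Import ring lra.
Import Order.TTheory GRing.Theory Num.Theory.
Local Open Scope ring_scope.

Set Implicit Arguments. Unset Strict Implicit. Unset Printing Implicit Defensive.

(* Let (w, w') be a bad pair of typical paths.  Primitivity gives
   return paths of a fixed length k + 1 from the ends of w and w' to vroot;
   appending them closes the joint walk, so its pair counts form a stationary
   measure of mass n + k + 1.  Mixing in a little of the diagonal coupling
   (e, e), e ~ P, which has marginals P and never disagrees, lands in
   A_{zeta,delta}.  By concavity of the entropy rate, the joint empirical
   entropy of (w, w') is therefore at most about n h, for any bound h of H on
   A_{zeta,delta}.  Typicality gives P(w) P(w') <= 2^(-2n H(P) + O(n zeta)),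
   while the empirical kernel of the pair gives it probability exactly
   2^(-joint empirical entropy), so P(w) P(w') is at most 2^(n (h - 2 H(P) +
   O(zeta))) times that probability.  Each such kernel is sub-stochastic on
   G x G, so summing over the at most (n + 1)^|E x E| joint types costs only a
   polynomial factor. *)

Section Logarithms.
Variable R : realType.
Implicit Types a b c d x y : R.

Lemma ln_le_subr1 x : 0 < x -> ln x <= x - 1.
Proof. by move=> x0; have := @le_ln1Dx R (x - 1); rewrite subrKC; apply; lra. Qed.

Lemma ln2_gt0 : 0 < ln (2 : R).
Proof. by apply: ln_gt0; lra. Qed.

(* The tangent line of ln at 1, applied to [s * b / a]. *)
Lemma ln_div_tangent a b (s : R) : 0 < a -> 0 < b -> 0 < s ->
  a * ln s + a - s * b <= a * ln (a / b).
Proof.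
move=> a0 b0 s0.
have : ln (s / (a / b)) <= s / (a / b) - 1.
  by apply: ln_le_subr1; rewrite !divr_gt0.
rewrite ln_div ?posrE ?divr_gt0 // => /(ler_wpM2l (ltW a0)).
have -> : a * (s / (a / b) - 1) = s * b - a by field; rewrite !gt_eqF.
rewrite mulrBr; lra.
Qed.

Lemma log_sum2 a b c d : 0 < a -> 0 < b -> 0 < c -> 0 < d ->
  (a + c) * ln ((a + c) / (b + d)) <= a * ln (a / b) + c * ln (c / d).
Proof.
move=> a0 b0 c0 d0; set s := (a + c) / (b + d).
have s0 : 0 < s by rewrite divr_gt0 ?addr_gt0.
have ha := ln_div_tangent a0 b0 s0; have hc := ln_div_tangent c0 d0 s0.
have hs : s * b + s * d = a + c by rewrite /s; field; rewrite gt_eqF ?addr_gt0.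
rewrite mulrDl; lra.
Qed.

Lemma ler_log2 x y : 0 < x -> 0 < y -> (log2 x <= log2 y) = (x <= y).
Proof. by move=> x0 y0; rewrite /log2 ler_pM2r ?invr_gt0 ?ln2_gt0 // ler_ln. Qed.

Lemma log2M x y : 0 < x -> 0 < y -> log2 (x * y) = log2 x + log2 y.
Proof. by move=> x0 y0; rewrite /log2 lnM ?posrE // mulrDl. Qed.

Lemma log2_powR2 x : log2 (2 `^ x) = x.
Proof. by rewrite /log2 ln_powR mulfK // gt_eqF ?ln2_gt0. Qed.

Lemma log2_prod (T : eqType) (s : seq T) (f : T -> R) : {in s, forall t, 0 < f t} ->
  log2 (\prod_(t <- s) f t) = \sum_(t <- s) log2 (f t).
Proof.
elim: s => [|t s IH] f0; first by rewrite !big_nil /log2 ln1 mul0r.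
have ft : 0 < f t by apply: f0; rewrite mem_head.
have fs u : u \in s -> 0 < f u by move=> us; apply: f0; rewrite inE us orbT.
by rewrite !big_cons log2M ?IH // big_seq prodr_gt0 // => u /fs.
Qed.

End Logarithms.

Section RelativeEntropyTerm.
Variable R : realType.
Implicit Types a b c d k : R.

Definition xlog2div a b : R := if a == 0 then 0 else a * log2 (a / b).

Lemma xlog2div0 b : xlog2div 0 b = 0.
Proof. by rewrite /xlog2div eqxx. Qed.

Lemma xlog2div_le_denom a b b' : 0 <= a <= b -> b <= b' ->
  xlog2div a b' <= xlog2div a b.
Proof.
move=> /andP[a0 ab] bb'; rewrite /xlog2div; case: eqVneq => // an0.
have ap : 0 < a by rewrite lt_def an0.
have b0 : 0 < b by apply: lt_le_trans ab.
have b'0 : 0 < b' by apply: lt_le_trans bb'.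
apply: ler_wpM2l; first exact: ltW.
by rewrite ler_log2 ?divr_gt0 // ler_pM2l // lef_pV2 ?posrE.
Qed.

Lemma xlog2div_subadd a b c d : 0 <= a <= b -> 0 <= c <= d ->
  xlog2div (a + c) (b + d) <= xlog2div a b + xlog2div c d.
Proof.
move=> /andP[a0 ab] /andP[c0 cd].
have [->|an0] := eqVneq a 0.
  by rewrite xlog2div0 !add0r xlog2div_le_denom ?c0 ?lerDr //; lra.
have [->|cn0] := eqVneq c 0.
  by rewrite xlog2div0 !addr0 xlog2div_le_denom ?a0 ?lerDl //; lra.
have ap : 0 < a by rewrite lt_def an0.
have cp : 0 < c by rewrite lt_def cn0.
rewrite /xlog2div (negbTE an0) (negbTE cn0) gt_eqF ?addr_gt0 // /log2 !mulrA -mulrDl.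
by rewrite ler_pM2r ?invr_gt0 ?ln2_gt0 // log_sum2 //; lra.
Qed.

Lemma xlog2divZ k a b : 0 < k -> xlog2div (k * a) (k * b) = k * xlog2div a b.
Proof.
move=> k0; rewrite /xlog2div mulf_eq0 (gt_eqF k0) /=; case: eqP => _; first by rewrite mulr0.
have -> : k * a / (k * b) = a / b by rewrite invfM mulrACA divff ?gt_eqF // mul1r.
by rewrite mulrA.
Qed.

Lemma xlog2div_le0 a b : 0 <= a <= b -> xlog2div a b <= 0.
Proof.
move=> /andP[a0 ab]; rewrite /xlog2div; case: eqVneq => // an0.
have ap : 0 < a by rewrite lt_def an0.
rewrite pmulr_rle0 // /log2 pmulr_lle0 ?invr_gt0 ?ln2_gt0 // ln_le0 //.
by rewrite ler_pdivrMr ?mul1r //; lra.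
Qed.

End RelativeEntropyTerm.

Section EntropyRate.
Variables (R : realType) (V E : finType) (src : E -> V).
Implicit Types X Y : E * E -> R.

Lemma HQE X : HQ src X = - \sum_p xlog2div (X p) (Q1 src X (src p.1, src p.2)).
Proof. by []. Qed.

Lemma Q1_comb a b X Y uu :
  Q1 src (fun p => a * X p + b * Y p) uu = a * Q1 src X uu + b * Q1 src Y uu.
Proof. by rewrite /Q1 big_split /= -!mulr_sumr. Qed.

Lemma le_Q1 X p : (forall q, 0 <= X q) -> X p <= Q1 src X (src p.1, src p.2).
Proof. by move=> X0; rewrite /Q1 (bigD1 p) //= lerDl sumr_ge0. Qed.

Lemma HQ_ge0 X : (forall q, 0 <= X q) -> 0 <= HQ src X.
Proof. by move=> X0; rewrite oppr_ge0 sumr_le0 // => p _; rewrite xlog2div_le0 ?X0 ?le_Q1. Qed.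

Lemma HQ_concave a b X Y : 0 < a -> 0 < b ->
  (forall q, 0 <= X q) -> (forall q, 0 <= Y q) ->
  a * HQ src X + b * HQ src Y <= HQ src (fun p => a * X p + b * Y p).
Proof.
move=> a0 b0 X0 Y0; rewrite !HQE !mulrN -opprD lerN2 !mulr_sumr -big_split /=.
apply: ler_sum => p _; rewrite Q1_comb -!xlog2divZ //.
by apply: xlog2div_subadd; rewrite ?mulr_ge0 ?ler_wpM2l ?le_Q1 // ltW.
Qed.

End EntropyRate.

Section StationaryPmf.
Variables (R : realType) (V E : finType) (src tgt : E -> V) (P : E -> R).
Hypothesis stat : stationary_pmf src tgt P.

Lemma P_le1 e : P e <= 1.
Proof.
case: stat => P0 [P1 _]; rewrite -P1 (bigD1 e) //= lerDl.
by rewrite sumr_ge0 // => x _; rewrite ltW.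
Qed.

Lemma P_le_pi e : P e <= Defs.pi src P (src e).
Proof.
have [P0 _] := stat; rewrite /Defs.pi (bigD1 e) //= lerDl.
by rewrite sumr_ge0 // => x _; rewrite ltW.
Qed.

Lemma condP_gt0 e : 0 < condP src P e.
Proof. by have [P0 _] := stat; rewrite divr_gt0 // (lt_le_trans (P0 e)) ?P_le_pi. Qed.

Lemma condP_le1 e : condP src P e <= 1.
Proof.
have [P0 _] := stat; have pi0 := lt_le_trans (P0 e) (P_le_pi e).
by rewrite ler_pdivrMr // mul1r P_le_pi.
Qed.

Lemma Pw_gt0 (w : seq E) : 0 < Pw src P w.
Proof. by rewrite prodr_gt0 // => e _; exact: condP_gt0. Qed.

End StationaryPmf.

Section EmpiricalCounts.
Variable R : realType.

Definition count_fun (T : eqType) (s : seq T) (x : T) : R := (count_mem x s)%:R.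

Lemma count_fun_ge0 (T : eqType) (s : seq T) x : 0 <= count_fun s x.
Proof. exact: ler0n. Qed.

Lemma count_fun_cons (T : eqType) (y : T) (s : seq T) x :
  count_fun (y :: s) x = (y == x)%:R + count_fun s x.
Proof. by rewrite /count_fun /= natrD. Qed.

Lemma sumr_seq_count (T : finType) (s : seq T) (f : T -> R) :
  \sum_(x <- s) f x = \sum_x count_fun s x * f x.
Proof.
elim: s => [|y s IH]; first by rewrite big_nil big1 // => x _; rewrite mul0r.
under [RHS]eq_bigr do rewrite count_fun_cons mulrDl.
rewrite big_cons IH big_split /=; congr (_ + _).
rewrite (bigD1 y) //= eqxx mul1r big1 ?addr0 // => x.
by rewrite eq_sym => /negbTE ->; rewrite mul0r.
Qed.

Lemma sum_count_fun (T : finType) (a : pred T) (s : seq T) :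
  \sum_(x | a x) count_fun s x = (count a s)%:R.
Proof.
elim: s => [|y s IH]; first by rewrite big1.
under eq_bigr do rewrite count_fun_cons.
rewrite big_split /= IH natrD; congr (_ + _); case ay: (a y).
  by rewrite (bigD1 y) //= eqxx big1 ?addr0 // => x /andP[_]; rewrite eq_sym => /negbTE ->.
by rewrite big1 // => x ax; case: eqP => // yx; rewrite yx ax in ay.
Qed.

Lemma sum_count_fun_fst (A B : finType) (z : seq (A * B)) a :
  \sum_b count_fun z (a, b) = count_fun (unzip1 z) a.
Proof.
elim: z => [|[a' b'] z IH]; first by rewrite big1.
under eq_bigr do rewrite count_fun_cons.
rewrite big_split /= IH count_fun_cons; congr (_ + _); case: eqVneq => [->|ne].
  rewrite (bigD1 b') //= eqxx big1 ?addr0 // => b /negbTE nb.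
  by rewrite xpair_eqE eqxx eq_sym nb.
by rewrite big1 // => b _; rewrite xpair_eqE (negbTE ne).
Qed.

Lemma sum_count_fun_snd (A B : finType) (z : seq (A * B)) b :
  \sum_a count_fun z (a, b) = count_fun (unzip2 z) b.
Proof.
elim: z => [|[a' b'] z IH]; first by rewrite big1.
under eq_bigr do rewrite count_fun_cons.
rewrite big_split /= IH count_fun_cons; congr (_ + _); case: eqVneq => [->|ne].
  rewrite (bigD1 a') //= eqxx big1 ?addr0 // => a /negbTE na.
  by rewrite xpair_eqE eqxx andbT eq_sym na.
by rewrite big1 // => a _; rewrite xpair_eqE (negbTE ne) andbF.
Qed.

Lemma count_path_telescope (T : Type) (W : eqType) (s t : T -> W) u x (z : seq T) :
  path (fun a b => t a == s b) x z ->
  (count (fun a => s a == u) (x :: z))%:R - (count (fun a => t a == u) (x :: z))%:R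
  = ((s x == u) : nat)%:R - ((t (last x z) == u) : nat)%:R :> R.
Proof.
elim: z x => [|y z IH] x /=; first by rewrite !addn0.
move=> /andP[/eqP txy /IH]; rewrite /= !natrD txy; lra.
Qed.

End EmpiricalCounts.

Lemma last_zip (A B : Type) (x : A) (y : B) (w : seq A) (w' : seq B) :
  size w = size w' -> last (x, y) (zip w w') = (last x w, last y w').
Proof. by elim: w w' x y => [|a w IH] [|b w'] x y //= [] /IH. Qed.

Section ProductGraph.
Variables (R : realType) (V E : finType) (src tgt : E -> V).

Definition pair_src (p : E * E) : V * V := (src p.1, src p.2).
Definition pair_tgt (p : E * E) : V * V := (tgt p.1, tgt p.2).

Lemma path_zip (x y : E) (w w' : seq E) : size w = size w' ->
  path (fun e f => tgt e == src f) x w -> path (fun e f => tgt e == src f) y w' ->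
  path (fun p q => pair_tgt p == pair_src q) (x, y) (zip w w').
Proof.
elim: w w' x y => [|a w IH] [|b w'] x y //= [] sz /andP[xa pa] /andP[yb pb].
by rewrite xpair_eqE xa yb /= IH.
Qed.

Lemma closed_walk_stationary (p : E * E) (z : seq (E * E)) :
  path (fun p q => pair_tgt p == pair_src q) p z -> pair_tgt (last p z) = pair_src p ->
  forall uu, Q1 src (count_fun R (p :: z)) uu = Qin tgt (count_fun R (p :: z)) uu.
Proof.
move=> walk closed uu; apply/eqP; rewrite -subr_eq0 /Q1 /Qin.
rewrite (@sum_count_fun R _ (fun q => pair_src q == uu)).
rewrite (@sum_count_fun R _ (fun q => pair_tgt q == uu)).
by rewrite count_path_telescope // closed subrr.
Qed.

End ProductGraph.

Section TupleSums.
Variables (R : realType) (T : finType).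

Lemma sum_tuple0 (f : 0.-tuple T -> R) : \sum_(t : 0.-tuple T) f t = f [tuple].
Proof. by rewrite (bigD1 [tuple]) //= big1 ?addr0 // => t /eqP[]; exact: tuple0. Qed.

Lemma sum_tupleS n (f : n.+1.-tuple T -> R) :
  \sum_(t : n.+1.-tuple T) f t = \sum_x \sum_(t : n.-tuple T) f [tuple of x :: t].
Proof.
rewrite pair_big (reindex (fun p : T * n.-tuple T => [tuple of p.1 :: p.2])) //=.
exists (fun t => (thead t, [tuple of behead t])) => [[x t] _|t _] /=.
  by rewrite theadE; congr (_, _); apply: val_inj.
by rewrite -tuple_eta.
Qed.

End TupleSums.

Section PairPaths.
Variables (R : realType) (V E : finType) (src tgt : E -> V).

Definition starts_at (v : V) (w : seq E) : bool :=
  if w is e :: _ then src e == v else true.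

Lemma is_path_cons e w :
  is_path src tgt (e :: w) = starts_at (tgt e) w && is_path src tgt w.
Proof. by case: w => //= f w; rewrite eq_sym. Qed.

Definition pair_path_from (uu : V * V) (w w' : seq E) : bool :=
  [&& is_path src tgt w, is_path src tgt w', starts_at uu.1 w & starts_at uu.2 w'].

Definition pair_path_weight (K : E * E -> R) uu (w w' : seq E) : R :=
  if pair_path_from uu w w' then \prod_(p <- zip w w') K p else 0.

Lemma pair_path_weight_ge0 K uu w w' : (forall p, 0 <= K p) -> 0 <= pair_path_weight K uu w w'.
Proof. by move=> K0; rewrite /pair_path_weight; case: ifP => // _; rewrite prodr_ge0. Qed.

Lemma pair_path_weight_cons K uu x y w w' :
  pair_path_weight K uu (x :: w) (y :: w') =
  if pair_src src (x, y) == uu then K (x, y) * pair_path_weight K (pair_tgt tgt (x, y)) w w'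
  else 0.
Proof.
rewrite /pair_path_weight /pair_path_from !is_path_cons big_cons.
case: uu => u u'; rewrite xpair_eqE /=.
by case: (src x == u) (src y == u') (starts_at _ w) (starts_at _ w') (is_path _ _ w)
  (is_path _ _ w') => [] [] [] [] [] []; rewrite ?mulr0.
Qed.

Lemma pair_path_mass_le1 (K : E * E -> R) : (forall p, 0 <= K p) ->
  (forall uu, \sum_(p | pair_src src p == uu) K p <= 1) ->
  forall n uu, \sum_(w : n.-tuple E) \sum_(w' : n.-tuple E) pair_path_weight K uu w w' <= 1.
Proof.
move=> K0 K1; elim=> [|n IH] uu; first by rewrite !sum_tuple0 /pair_path_weight /= big_nil.
have -> : \sum_(w : n.+1.-tuple E) \sum_(w' : n.+1.-tuple E) pair_path_weight K uu w w' =
    \sum_x \sum_y \sum_(t : n.-tuple E) \sum_(t' : n.-tuple E)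
      pair_path_weight K uu (x :: t) (y :: t').
  rewrite sum_tupleS; apply: eq_bigr => x _.
  by under eq_bigr do rewrite sum_tupleS; exact: exchange_big.
apply: (@le_trans _ _ (\sum_x \sum_y if pair_src src (x, y) == uu then K (x, y) else 0)).
  apply: ler_sum => x _; apply: ler_sum => y _.
  under eq_bigr do under eq_bigr do rewrite pair_path_weight_cons.
  case: eqP => _; last by rewrite big1 // => t _; rewrite big1.
  under eq_bigr do rewrite -mulr_sumr.
  by rewrite -mulr_sumr ler_piMr ?K0 ?IH.
rewrite pair_big; apply: le_trans (K1 uu); rewrite [leRHS]big_mkcond.
by apply: ler_sum => -[x y].
Qed.

End PairPaths.

Section DiagonalMeasure.
Variables (R : realType) (Sigma V E : finType) (src tgt : E -> V) (lab : E -> Sigma).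
Variable P : E -> R.

Definition diagQ (p : E * E) : R := if p.1 == p.2 then P p.1 else 0.

Lemma sum_diagQ (C : pred (E * E)) :
  \sum_(p | C p) diagQ p = \sum_x (if C (x, x) then P x else 0).
Proof.
transitivity (\sum_x \sum_y if C (x, y) then diagQ (x, y) else 0).
  by rewrite pair_big big_mkcond; apply: eq_bigr => -[x y].
apply: eq_bigr => x _; rewrite (bigD1 x) //= big1 ?addr0 => [|y /negbTE yx].
  by rewrite /diagQ /= eqxx.
by rewrite /diagQ /= eq_sym yx if_same.
Qed.

Lemma Qw_diagQ e : Qw diagQ e = P e.
Proof.
rewrite /Qw (bigD1 e) //= big1 ?addr0 => [|y /negbTE ye]; first by rewrite /diagQ /= eqxx.
by rewrite /diagQ /= eq_sym ye.
Qed.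

Lemma Qw'_diagQ e : Qw' diagQ e = P e.
Proof.
rewrite /Qw' (bigD1 e) //= big1 ?addr0 => [|y /negbTE ye]; first by rewrite /diagQ /= eqxx.
by rewrite /diagQ /= ye.
Qed.

Lemma diagQ_ge0 : (forall e, 0 <= P e) -> forall p, 0 <= diagQ p.
Proof. by move=> P0 p; rewrite /diagQ; case: ifP. Qed.

Lemma diagQ_stationary : (forall u, \sum_(e | src e == u) P e = \sum_(e | tgt e == u) P e) ->
  forall uu, Q1 src diagQ uu = Qin tgt diagQ uu.
Proof.
move=> st [u u']; rewrite /Q1 /Qin !sum_diagQ /=.
have [<-|ne] := eqVneq u u'.
  under eq_bigr do rewrite xpair_eqE andbb.
  under [RHS]eq_bigr do rewrite xpair_eqE andbb.
  by rewrite -!big_mkcond st.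
rewrite big1 ?[RHS]big1 // => x _; rewrite xpair_eqE;
  by case: ifP => // /andP[/eqP a /eqP b]; move: ne; rewrite -a -b eqxx.
Qed.

Lemma EQf_diagQ : EQf lab diagQ = 0.
Proof.
rewrite /EQf big1 // => -[x y] _; rewrite /diagQ /=.
by case: eqP => [->|]; rewrite ?eqxx ?mulr0 ?mul0r.
Qed.

End DiagonalMeasure.

Section MixtureWithDiagonal.
Variables (R : realType) (Sigma V E : finType) (src tgt : E -> V) (lab : E -> Sigma).
Variables (P : E -> R) (mu N K : R).

Definition mix_den : R := mu * (N + K) + K.

(* For [T] of mass [N + K], this shrinks the deviations of [T] from the
   constraints of [A_set] by the factor [mu / mix_den]. *)
Definition mix_diag (T : E * E -> R) (p : E * E) : R :=
  mu / mix_den * T p + K / mix_den * diagQ P p.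

Hypotheses (N0 : 0 <= N) (K0 : 0 < K) (mu0 : 0 < mu).

Lemma mix_den_gt0 : 0 < mix_den.
Proof. by rewrite addr_gt0 // mulr_gt0 // ltr_wpDl. Qed.

Lemma mix_marginal_lt zeta q p : mu <= zeta -> 0 <= p <= 1 ->
  `|q - (N + K) * p| < zeta * N + K ->
  `|mu / mix_den * q + K / mix_den * p - p| < zeta.
Proof.
move=> muz /andP[p0 p1] hq; have den0 := mix_den_gt0.
have -> : mu / mix_den * q + K / mix_den * p - p = mu / mix_den * (q - (N + K) * p).
  by rewrite /mix_den; field; rewrite gt_eqF.
rewrite normrM ger0_norm ?divr_ge0 ?ltW // mulrAC ltr_pdivrMr //.
have := hq; rewrite -(ltr_pM2l mu0).
have : 0 <= (zeta - mu) * K by rewrite mulr_ge0 ?subr_ge0 // ltW.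
have : 0 <= zeta * mu * K by rewrite !mulr_ge0 // ltW // (lt_le_trans mu0).
have -> : zeta * mix_den = mu * (zeta * N + K) + (zeta - mu) * K + zeta * mu * K.
  by rewrite /mix_den; ring.
lra.
Qed.

Lemma mix_scaled_le delta x : mu <= delta -> x <= delta * N + K ->
  mu / mix_den * x <= delta.
Proof.
move=> mud hx; have den0 := mix_den_gt0.
rewrite mulrAC ler_pdivrMr //; have := ler_wpM2l (ltW mu0) hx.
have : 0 <= (delta - mu) * K by rewrite mulr_ge0 ?subr_ge0 // ltW.
have : 0 <= delta * mu * K by rewrite !mulr_ge0 // ltW // (lt_le_trans mu0).
have -> : delta * mix_den = mu * (delta * N + K) + (delta - mu) * K + delta * mu * K.
  by rewrite /mix_den; ring.
lra.
Qed.

Lemma mix_diag_in_A zeta delta (T : E * E -> R) :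
  stationary_pmf src tgt P -> mu <= zeta -> mu <= delta ->
  (forall p, 0 <= T p) -> (forall uu, Q1 src T uu = Qin tgt T uu) ->
  \sum_p T p = N + K ->
  (forall e, `|Qw T e - (N + K) * P e| < zeta * N + K /\
             `|Qw' T e - (N + K) * P e| < zeta * N + K) ->
  EQf lab T <= delta * N + K ->
  A_set src tgt lab P zeta delta (mix_diag T).
Proof.
move=> stat muz mud T0 Tst Tsum Tmarg Tf; have den0 := mix_den_gt0.
have [P0 [P1 Pst]] := stat; have D0 := diagQ_ge0 (fun e => ltW (P0 e)).
have P01 e : 0 <= P e <= 1 by rewrite (P_le1 stat) ltW ?P0.
split; [split; [|split]|split].
- by move=> p; rewrite /mix_diag addr_ge0 ?mulr_ge0 ?invr_ge0 ?T0 ?D0 // ltW.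
- rewrite big_split /= -!mulr_sumr Tsum sum_diagQ P1 /mix_den; field.
  by rewrite -/mix_den gt_eqF.
- move=> uu; rewrite /mix_diag Q1_comb (diagQ_stationary Pst) Tst.
  by rewrite /Qin big_split /= -!mulr_sumr.
- move=> e; have [hw hw'] := Tmarg e.
  rewrite /Qw /Qw' !big_split /= -!mulr_sumr -/(Qw T e) -/(Qw' T e).
  by rewrite -/(Qw (diagQ P) e) -/(Qw' (diagQ P) e) Qw_diagQ Qw'_diagQ !mix_marginal_lt.
- rewrite /EQf; under eq_bigr do rewrite mulrDl -!mulrA.
  rewrite big_split /= -!mulr_sumr -/(EQf lab (diagQ P)) EQf_diagQ !mulr0 addr0 mulrA.
  by rewrite -/(EQf lab T) mix_scaled_le.
Qed.

Lemma HQ_mix_diag_ge (T : E * E -> R) : (forall e, 0 <= P e) -> (forall p, 0 <= T p) ->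
  mu / mix_den * HQ src T <= HQ src (mix_diag T).
Proof.
move=> P0 T0; have den0 := mix_den_gt0; have D0 := diagQ_ge0 P0.
apply: le_trans (HQ_concave _ _ _ T0 D0); rewrite ?divr_gt0 // lerDl.
by rewrite mulr_ge0 ?divr_ge0 ?HQ_ge0 // ltW.
Qed.

End MixtureWithDiagonal.

Section JointCounts.
Variables (R : realType) (Sigma V E : finType) (src : E -> V) (lab : E -> Sigma).

Lemma count_fun_cat (T : eqType) (s t : seq T) x :
  count_fun R (s ++ t) x = count_fun R s x + count_fun R t x.
Proof. by rewrite /count_fun count_cat natrD. Qed.

Lemma Qw_count_fun_zip (w w' : seq E) e : size w = size w' ->
  Qw (count_fun R (zip w w')) e = count_fun R w e.
Proof. by move=> sz; rewrite /Qw sum_count_fun_fst unzip1_zip ?sz. Qed.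

Lemma Qw'_count_fun_zip (w w' : seq E) e : size w = size w' ->
  Qw' (count_fun R (zip w w')) e = count_fun R w' e.
Proof. by move=> sz; rewrite /Qw' sum_count_fun_snd unzip2_zip ?sz. Qed.

Lemma sum_count_fun_size (T : finType) (s : seq T) : \sum_x count_fun R s x = (size s)%:R.
Proof. by rewrite (@sum_count_fun R _ xpredT) count_predT. Qed.

Lemma EQf_count_fun (z : seq (E * E)) :
  EQf lab (count_fun R z) = \sum_(p <- z) (lab p.1 != lab p.2)%:R.
Proof. by rewrite sumr_seq_count. Qed.

Lemma dH_zip n (w w' : n.-tuple E) :
  (dH lab w w')%:R = \sum_(p <- zip w w') (lab p.1 != lab p.2)%:R :> R.
Proof.
rewrite -(big_map (fun p => lab p.1 != lab p.2 : nat) xpredT) natr_sum.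
have sz : size (zip w w') == n by rewrite size_zip !size_tuple minnn.
rewrite (big_nth 0%N) size_map (eqP sz) big_mkord; apply: eq_bigr => i _.
have x0 := tnth w i.
by rewrite (nth_map (x0, x0)) ?(eqP sz) // nth_zip ?size_tuple // -!tnth_nth.
Qed.

Lemma HQ_count_fun_cat_ge (s t : seq (E * E)) :
  HQ src (count_fun R s) <= HQ src (count_fun R (s ++ t)).
Proof.
rewrite (_ : count_fun R (s ++ t) = fun p => 1 * count_fun R s p + 1 * count_fun R t p).
  apply: le_trans (HQ_concave _ ltr01 ltr01 (@count_fun_ge0 _ _ _) (@count_fun_ge0 _ _ _)).
  by rewrite !mul1r lerDl HQ_ge0 // => p; exact: count_fun_ge0.
by apply/funext => p; rewrite count_fun_cat !mul1r.
Qed.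

End JointCounts.

Lemma neq_tuple_gt0 (T : eqType) n (w w' : n.-tuple T) : w' != w -> (0 < n)%N.
Proof. by case: n w w' => // w w'; rewrite (tuple0 w) (tuple0 w') eqxx. Qed.

Lemma typical_marginal_lt (R : realType) (zeta N K c d p : R) : 0 < N ->
  `|c / N - p| < zeta -> 0 <= d <= K -> 0 <= p <= 1 ->
  `|c + d - (N + K) * p| < zeta * N + K.
Proof.
move=> N0; rewrite ltr_norml => /andP[lo hi] /andP[d0 dK] /andP[p0 p1].
rewrite -[c](divfK (lt0r_neq0 N0)); set u := c / N in lo hi *.
have h1 : 0 < (u - p + zeta) * N by rewrite mulr_gt0 //; lra.
have h2 : 0 < (zeta - (u - p)) * N by rewrite mulr_gt0 //; lra.
have h3 : K * p <= K by rewrite ler_piMr // (le_trans d0).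
have h4 : 0 <= K * p by rewrite mulr_ge0 // (le_trans d0).
rewrite ltr_norml; apply/andP; split; lra.
Qed.

Section BadPairs.
Variables (R : realType) (Sigma V E : finType) (src tgt : E -> V) (lab : E -> Sigma).
Variables (P : E -> R) (k : nat) (vroot : V) (zeta delta : R).
Hypothesis stat : stationary_pmf src tgt P.
Hypothesis connect_k : forall u v : V, exists (e0 : E) (w : seq E),
  size w = k /\ is_path src tgt (e0 :: w) /\ src e0 = u /\ tgt (last e0 w) = v.
Hypothesis zeta_gt0 : 0 < zeta.

Lemma close_pair_paths (w w' : seq E) : size w = size w' -> (0 < size w)%N ->
  is_path src tgt w -> is_path src tgt w' ->
  starts_at src vroot w -> starts_at src vroot w' ->
  exists C C' : seq E, [/\ size C = k.+1, size C' = k.+1 &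
    forall uu, Q1 src (count_fun R (zip w w' ++ zip C C')) uu =
               Qin tgt (count_fun R (zip w w' ++ zip C C')) uu].
Proof.
case: w w' => [|x w] [|y w'] //= [sz] _ pw pw' /eqP sx /eqP sy.
have [e0 [c [szc [pc [sc tc]]]]] := connect_k (tgt (last x w)) vroot.
have [e0' [c' [szc' [pc' [sc' tc']]]]] := connect_k (tgt (last y w')) vroot.
exists (e0 :: c), (e0' :: c'); split; [by rewrite /= szc | by rewrite /= szc' |].
rewrite -zip_cat /= ?sz //.
have szC : size (w ++ e0 :: c) = size (w' ++ e0' :: c') by rewrite !size_cat /= szc szc' sz.
apply: closed_walk_stationary.
  by apply: path_zip; rewrite // cat_path ?pw ?pw' /= ?sc ?sc' eqxx.
by rewrite last_zip // !last_cat /= /pair_tgt tc tc' /pair_src sx sy.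
Qed.

Lemma bad_pair_entropy_le n (w w' : n.-tuple E) :
  typical src tgt P vroot zeta w -> typical src tgt P vroot zeta w' -> w' != w ->
  (dH lab w w')%:R / n%:R < delta ->
  let mu := Num.min zeta delta in
  exists2 Q, A_set src tgt lab P zeta delta Q &
    HQ src (count_fun R (zip w w')) <= mix_den mu n%:R k.+1%:R / mu * HQ src Q.
Proof.
move=> /and3P[pw sw /forallP tw] /and3P[pw' sw' /forallP tw'] neq bad mu.
have n0 := neq_tuple_gt0 neq.
have delta0 : 0 < delta by apply: le_lt_trans bad; rewrite divr_ge0 ?ler0n.
have mu0 : 0 < mu by rewrite lt_min zeta_gt0 delta0.
have N0 : 0 <= n%:R :> R by rewrite ler0n.
have K0 : 0 < k.+1%:R :> R by rewrite ltr0n.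
have szw : size w = size w' by rewrite !size_tuple.
have w0 : (0 < size w)%N by rewrite size_tuple.
have [C [C' [szC szC' stat_Z]]] := close_pair_paths szw w0 pw pw' sw sw'.
set Z := zip w w' ++ zip C C' in stat_Z.
have [P0 _] := stat; have P01 e : 0 <= P e <= 1 by rewrite (P_le1 stat) ltW ?P0.
exists (mix_diag P mu n%:R k.+1%:R (count_fun R Z)).
  apply: mix_diag_in_A; rewrite ?ge_min ?lexx ?orbT //.
  - by rewrite sum_count_fun_size size_cat !size_zip !size_tuple szC szC' !minnn natrD.
  - move=> e; rewrite /Z -!zip_cat ?szC ?szC' //.
    rewrite Qw_count_fun_zip ?Qw'_count_fun_zip ?size_cat ?szw ?szC ?szC' //.
    have closing_count D : size D = k.+1 -> 0 <= count_fun R D e <= k.+1%:R.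
      by move=> <-; rewrite count_fun_ge0 ler_nat count_size.
    rewrite !count_fun_cat; split; apply: typical_marginal_lt;
      rewrite ?ltr0n ?P01 ?closing_count //; [exact: tw | exact: tw'].
  - rewrite EQf_count_fun big_cat /= -dH_zip.
    have hbad : (dH lab w w')%:R <= delta * n%:R by rewrite -ler_pdivrMr ?ltr0n // ltW.
    suff : \sum_(p <- zip C C') (lab p.1 != lab p.2)%:R <= k.+1%:R :> R by lra.
    have <- : size (zip C C') = k.+1 by rewrite size_zip szC szC' minnn.
    rewrite -sum1_size natr_sum.
    by apply: ler_sum => p _; rewrite ler_nat leq_b1.
have hZ := HQ_mix_diag_ge src N0 K0 mu0 (fun e => ltW (P0 e)) (@count_fun_ge0 R _ Z).
have den0 := mix_den_gt0 N0 K0 mu0.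
apply: le_trans (HQ_count_fun_cat_ge R src (zip w w') (zip C C')) _; rewrite -/Z.
rewrite -[leLHS](mulKf (lt0r_neq0 (divr_gt0 mu0 den0))) invf_div.
by apply: ler_wpM2l hZ; rewrite divr_ge0 // ltW.
Qed.

End BadPairs.

Section EmpiricalKernel.
Variables (R : realType) (V E : finType) (src tgt : E -> V).

Definition condQ (T : E * E -> R) (p : E * E) : R := T p / Q1 src T (pair_src src p).

Lemma condQ_ge0 T : (forall q, 0 <= T q) -> forall p, 0 <= condQ T p.
Proof. by move=> T0 p; rewrite divr_ge0 // sumr_ge0. Qed.

Lemma condQ_mass_le1 T : (forall q, 0 <= T q) ->
  forall uu, \sum_(p | pair_src src p == uu) condQ T p <= 1.
Proof.
move=> T0 uu; rewrite (eq_bigr (fun p => T p / Q1 src T uu)); last by move=> p /eqP <-.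
rewrite -mulr_suml -/(Q1 src T uu).
have [->|Q1n0] := eqVneq (Q1 src T uu) 0; first by rewrite mul0r.
by rewrite divff.
Qed.

Lemma condQ_count_gt0 (z : seq (E * E)) p : p \in z -> 0 < condQ (count_fun R z) p.
Proof.
move=> pz; have c0 : 0 < count_fun R z p by rewrite ltr0n -has_count; apply/hasP; exists p => /=.
by rewrite divr_gt0 // (lt_le_trans c0) // le_Q1 // => q; exact: count_fun_ge0.
Qed.

Lemma sum_log2_condQ_count (z : seq (E * E)) :
  \sum_(p <- z) log2 (condQ (count_fun R z) p) = - HQ src (count_fun R z).
Proof.
rewrite sumr_seq_count HQE opprK; apply: eq_bigr => p _.
by rewrite /xlog2div; case: eqP => [->|_]; rewrite ?mul0r.
Qed.

Lemma sum_pair_paths_condQ_le n uu :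
  \sum_(w : n.-tuple E) \sum_(w' : n.-tuple E)
    pair_path_weight src tgt (condQ (count_fun R (zip w w'))) uu w w'
  <= ((n.+1) ^ #|{: E * E}|)%:R.
Proof.
pose type_of (w w' : n.-tuple E) : {ffun E * E -> 'I_n.+1} :=
  [ffun p => inord (count_mem p (zip w w'))].
pose fun_of (t : {ffun E * E -> 'I_n.+1}) (q : E * E) : R := (t q : nat)%:R.
have fun_of0 t q : 0 <= fun_of t q by rewrite ler0n.
have count_type (w w' : n.-tuple E) : count_fun R (zip w w') = fun_of (type_of w w').
  apply/funext => q; rewrite /fun_of /type_of ffunE inordK // ltnS.
  by rewrite (leq_trans (count_size _ _)) // size_zip !size_tuple minnn.
apply: (@le_trans _ _ (\sum_(t : {ffun E * E -> 'I_n.+1}) \sum_(w : n.-tuple E)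
   \sum_(w' : n.-tuple E) pair_path_weight src tgt (condQ (fun_of t)) uu w w')).
  rewrite [leRHS]exchange_big; apply: ler_sum => w _.
  rewrite [leRHS]exchange_big; apply: ler_sum => w' _.
  rewrite count_type (bigD1 (type_of w w')) //= lerDl sumr_ge0 // => t _.
  by apply: pair_path_weight_ge0; exact: condQ_ge0.
apply: (@le_trans _ _ (\sum_(t : {ffun E * E -> 'I_n.+1}) 1)).
  by apply: ler_sum => t _; apply: pair_path_mass_le1; [exact: condQ_ge0 | exact: condQ_mass_le1].
by rewrite sumr_const card_ffun card_ord.
Qed.

End EmpiricalKernel.

Section TypicalPaths.
Variables (R : realType) (V E : finType) (src tgt : E -> V) (P : E -> R).
Hypothesis stat : stationary_pmf src tgt P.

Definition surprisal : R := \sum_e - log2 (condP src P e).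

Lemma sum_log2_condP_typical zeta n (w : n.-tuple E) : (0 < n)%N ->
  (forall e, `|(count_mem e w)%:R / n%:R - P e| < zeta) ->
  \sum_(e <- w) log2 (condP src P e) <= n%:R * (zeta * surprisal - HP src P).
Proof.
move=> n0 typ; have N0 : 0 < n%:R :> R by rewrite ltr0n.
have -> : zeta * surprisal - HP src P = \sum_e (P e - zeta) * log2 (condP src P e).
  rewrite /surprisal /HP opprK mulr_sumr -big_split /=.
  by apply: eq_bigr => e _; rewrite /condP; ring.
rewrite sumr_seq_count mulr_sumr; apply: ler_sum => e _; rewrite [leRHS]mulrA.
apply: ler_wnM2r; first by rewrite /log2 pmulr_lle0 ?invr_gt0 ?ln2_gt0 // ln_le0 ?(condP_le1 stat).
have := typ e; rewrite ltr_norml => /andP[lo _].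
by rewrite -ler_pdivlMl // ltW //; lra.
Qed.

End TypicalPaths.

Section BadPairMass.
Variables (R : realType) (Sigma V E : finType) (src tgt : E -> V) (lab : E -> Sigma).
Variables (P : E -> R) (k : nat) (vroot : V) (zeta delta h : R).
Hypothesis stat : stationary_pmf src tgt P.
Hypothesis connect_k : forall u v : V, exists (e0 : E) (w : seq E),
  size w = k /\ is_path src tgt (e0 :: w) /\ src e0 = u /\ tgt (last e0 w) = v.
Hypothesis zeta_gt0 : 0 < zeta.
Hypothesis HQ_le : forall Q, A_set src tgt lab P zeta delta Q -> HQ src Q <= h.

Let mu := Num.min zeta delta.

Definition bad_pair_exponent n : R :=
  2 * n%:R * (zeta * surprisal src P - HP src P) + (n%:R + k.+1%:R + k.+1%:R / mu) * h.

Lemma bad_pair_weight_le n (w w' : n.-tuple E) :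
  typical src tgt P vroot zeta w -> typical src tgt P vroot zeta w' -> w' != w ->
  (dH lab w w')%:R / n%:R < delta ->
  Pw src P w * Pw src P w' <=
  (\prod_(p <- zip w w') condQ src (count_fun R (zip w w')) p) * 2 `^ bad_pair_exponent n.
Proof.
move=> tw tw' neq bad; have n0 := neq_tuple_gt0 neq.
have [Q AQ HQ_bad] := bad_pair_entropy_le stat connect_k zeta_gt0 tw tw' neq bad.
have delta0 : 0 < delta by apply: le_lt_trans bad; rewrite divr_ge0 ?ler0n.
have mu0 : 0 < mu by rewrite lt_min zeta_gt0 delta0.
set z := zip w w'; have condQ0 : {in z, forall p, 0 < condQ src (count_fun R z) p}.
  by move=> p; exact: condQ_count_gt0.
have cP0 e : 0 < condP src P e := condP_gt0 stat e.
have Pw0 (u : seq E) : 0 < Pw src P u := Pw_gt0 stat u.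
have prod0 : 0 < \prod_(p <- z) condQ src (count_fun R z) p.
  by rewrite big_seq prodr_gt0.
rewrite -ler_log2 ?mulr_gt0 ?powR_gt0 // !log2M ?powR_gt0 //.
rewrite /Pw !log2_prod // ?sum_log2_condQ_count ?log2_powR2 //.
move: tw tw' => /and3P[_ _ /forallP tw] /and3P[_ _ /forallP tw'].
have := sum_log2_condP_typical stat n0 tw; have := sum_log2_condP_typical stat n0 tw'.
have : HQ src (count_fun R z) <= (n%:R + k.+1%:R + k.+1%:R / mu) * h.
  have -> : n%:R + k.+1%:R + k.+1%:R / mu = mix_den mu n%:R k.+1%:R / mu.
    by rewrite /mix_den; field; rewrite gt_eqF.
  apply: le_trans HQ_bad _; apply: ler_wpM2l; last exact: HQ_le.
  have den0 : 0 < mix_den mu n%:R k.+1%:R by rewrite mix_den_gt0 ?ler0n ?ltr0n.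
  by rewrite divr_ge0 // ltW.
rewrite /bad_pair_exponent; lra.
Qed.

Lemma PEbad_le n : PEbad src tgt lab P vroot zeta delta n <=
  2 `^ bad_pair_exponent n * ((n.+1) ^ #|{: E * E}|)%:R.
Proof.
set B := 2 `^ _; have B0 : 0 <= B by rewrite powR_ge0.
have weight0 (w w' : n.-tuple E) : 0 <= B * pair_path_weight src tgt
    (condQ src (count_fun R (zip w w'))) (vroot, vroot) w w'.
  rewrite mulr_ge0 // pair_path_weight_ge0 // => p.
  by rewrite condQ_ge0 // => q; exact: count_fun_ge0.
apply: le_trans (ler_wpM2l B0 (sum_pair_paths_condQ_le R src tgt n (vroot, vroot))).
rewrite /PEbad mulr_sumr [leLHS]big_mkcond; apply: ler_sum => w _; rewrite mulr_sumr.
case: ifP => tw; last by rewrite sumr_ge0.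
rewrite [leLHS]big_mkcond; apply: ler_sum => w' _.
case: ifP => [/and3P[tw' neq bad] | _]; last exact: weight0.
rewrite /pair_path_weight ifT; first by rewrite [X in _ <= X]mulrC bad_pair_weight_le.
by move: tw tw' => /and3P[pw sw _] /and3P[pw' sw' _]; apply/and4P.
Qed.

End BadPairMass.

Section Asymptotics.
Variable R : realType.

Lemma nat_gt_eventually (c : R) : exists N, forall n, (N <= n)%N -> c < n%:R.
Proof.
exists (Num.Def.archi_bound `|c|) => n Nn; apply: le_lt_trans (ler_norm c) _.
by apply: lt_le_trans (archi_boundP (normr_ge0 c)) _; rewrite ler_nat.
Qed.

Lemma ln_nat_sqr_le n : ln (n.+1)%:R ^+ 2 <= 2 * n%:R :> R.
Proof.
have y0 : 0 <= ln (n.+1)%:R :> R by rewrite ln_ge0 // ler1n.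
have := expR_ge1Dxn 1 y0; rewrite lnK ?posrE ?ltr0n // -natr1.
by rewrite (_ : (2`!)%:R = 2 :> R) //; lra.
Qed.

Lemma ln_nat_le_eventually (eta : R) : 0 < eta ->
  exists N, forall n, (N <= n)%N -> ln (n.+1)%:R <= eta * n%:R.
Proof.
move=> eta0; have [N hN] := nat_gt_eventually (2 / eta ^+ 2).
exists (maxn 1 N) => n; rewrite geq_max => /andP[n1 /hN large].
have n0 : 0 < n%:R :> R by rewrite ltr0n.
rewrite leNgt; apply/negP => small.
have en0 : 0 <= eta * n%:R by rewrite mulr_ge0 // ltW.
have h1 : 2 * n%:R < (eta * n%:R) * (eta * n%:R).
  have -> : (eta * n%:R) * (eta * n%:R) = n%:R * eta ^+ 2 * n%:R by ring.
  by rewrite ltr_pM2r // -ltr_pdivrMr // exprn_gt0.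
have := ltr_pM en0 en0 small small; have := ln_nat_sqr_le n; rewrite expr2; lra.
Qed.

Lemma affine_ln_div_le_eventually (a b eps : R) : 0 <= b -> 0 < eps ->
  exists N, forall n, (N <= n)%N -> (a + b * ln (n.+1)%:R) / n%:R <= eps.
Proof.
move=> b0 eps0; set eta := eps / (2 * (b + 1)).
have eta0 : 0 < eta by rewrite divr_gt0 // mulr_gt0 //; lra.
have beta : b * eta <= eps / 2.
  by rewrite /eta mulrA ler_pdivrMr ?mulr_gt0 //; [nra | lra].
have [N1 hN1] := ln_nat_le_eventually eta0.
have [N2 hN2] := nat_gt_eventually (2 * a / eps).
exists (maxn 1 (maxn N1 N2)) => n; rewrite !geq_max => /and3P[n1 /hN1 hln /hN2].
have n0 : 0 < n%:R :> R by rewrite ltr0n.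
rewrite ltr_pdivrMr // ler_pdivrMr // => ha.
have := ler_wpM2l b0 hln; have := ler_wpM2r (ltW n0) beta; lra.
Qed.

Lemma limn_esup_le_eventually (u : nat -> \bar R) (y : R) :
  (forall eps : R, 0 < eps -> exists N, forall n, (N <= n)%N -> (u n <= (y + eps)%:E)%E) ->
  (limn_esup u <= y%:E)%E.
Proof.
move=> H; apply/lee_addgt0Pr => e e0; have [N hN] := H e e0.
rewrite limn_esup_lim; apply: lime_le; first exact: is_cvg_esups.
exists N => // m /= Nm; apply: ge_ereal_sup => _ [j /= mj <-].
by rewrite -EFinD; apply: hN; exact: leq_trans mj.
Qed.

Lemma le_oppe_ereal_infD (T : Type) (A : set T) (f : T -> R) (u : \bar R) (c : R) :
  (forall r : R, (forall q, A q -> r <= f q) -> (u <= (c - r)%:E)%E) ->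
  (u <= - ereal_inf [set (f q)%:E | q in A] + c%:E)%E.
Proof.
move=> H; set S := ereal_inf _.
have lb q : A q -> (S <= (f q)%:E)%E by move=> Aq; apply: ereal_inf_lbound; exists q.
case Sinf: S lb => [r| |] lb.
- by rewrite -EFinN -EFinD addrC; apply: H => q /lb; rewrite lee_fin.
- have Aempty q : ~ A q by move=> /lb; rewrite leye_eq.
  rewrite /= addNye; case: u H => [x| |] H //.
  + have := H (c - x + 1)%R (fun q Aq => False_ind _ (Aempty q Aq)).
    by rewrite lee_fin => h; exfalso; clear -h; lra.
  + by have := H 0%R (fun q Aq => False_ind _ (Aempty q Aq)).
- by rewrite /= addye // leey.
Qed.

End Asymptotics.

Section Limsup.
Variables (R : realType) (Sigma V E : finType) (src tgt : E -> V) (lab : E -> Sigma).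
Variables (P : E -> R) (k : nat) (vroot : V) (zeta delta h : R).
Hypothesis stat : stationary_pmf src tgt P.
Hypothesis connect_k : forall u v : V, exists (e0 : E) (w : seq E),
  size w = k /\ is_path src tgt (e0 :: w) /\ src e0 = u /\ tgt (last e0 w) = v.
Hypothesis zeta_gt0 : 0 < zeta.
Hypothesis HQ_le : forall Q, A_set src tgt lab P zeta delta Q -> HQ src Q <= h.

Let PEbad_n := PEbad src tgt lab P vroot zeta delta.
Let rate := h - 2 * HP src P + 2 * surprisal src P * zeta.
Let mix_overhead := (k.+1%:R + k.+1%:R / Num.min zeta delta) * h.
Let types_coef := #|{: E * E}|%:R / ln (2 : R).

Lemma log2_PEbad_le n : (0 < n)%N -> 0 < PEbad_n n ->
  log2 (PEbad_n n) / n%:R <= rate + (mix_overhead + types_coef * ln (n.+1)%:R) / n%:R.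
Proof.
move=> n0 PE0; have n0' : 0 < n%:R :> R by rewrite ltr0n.
have := PEbad_le vroot stat connect_k zeta_gt0 HQ_le n.
rewrite -ler_log2 ?mulr_gt0 ?powR_gt0 ?ltr0n ?expn_gt0 //.
rewrite log2M ?powR_gt0 ?ltr0n ?expn_gt0 // log2_powR2 => hle.
have log2_types : log2 ((n.+1 ^ #|{: E * E}|)%:R) = types_coef * ln (n.+1)%:R.
  rewrite /log2 /types_coef natrX lnXn ?ltr0n // -mulr_natr.
  by field; rewrite gt_eqF ?ln2_gt0.
rewrite log2_types in hle; rewrite ler_pdivrMr //.
have -> : (rate + (mix_overhead + types_coef * ln (n.+1)%:R) / n%:R) * n%:R =
    bad_pair_exponent src P k zeta delta h n + types_coef * ln (n.+1)%:R.
  by rewrite mulrDl divfK ?lt0r_neq0 // /bad_pair_exponent /rate /mix_overhead; ring.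
exact: hle.
Qed.

Lemma limn_esup_PEbad_le :
  (limn_esup (fun n => (n%:R^-1)%:E * elog2 (PEbad_n n)) <= rate%:E)%E.
Proof.
apply: limn_esup_le_eventually => eps eps0.
have types_coef0 : 0 <= types_coef by rewrite divr_ge0 // ltW // ln2_gt0.
have [N hN] := affine_ln_div_le_eventually mix_overhead types_coef0 eps0.
exists (maxn 1 N) => n; rewrite geq_max => /andP[n0 /hN rem].
rewrite /elog2; case: ifPn => [PE0|_]; last first.
  by rewrite mulrNy gtr0_sg ?invr_gt0 ?ltr0n // mul1e leNye.
rewrite -EFinM lee_fin mulrC; apply: le_trans (log2_PEbad_le n0 PE0) _.
by rewrite lerD2l.
Qed.

End Limsup.

Unset Implicit Arguments. Set Strict Implicit. Set Printing Implicit Defensive.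
Local Open Scope classical_set_scope.

Theorem lemma3 (R : realType) (Sigma V E : finType)
  (src tgt : E -> V) (lab : E -> Sigma) (P : E -> R) :
  deterministic src lab ->
  lossless src tgt lab ->
  primitive src tgt ->
  stationary_pmf src tgt P ->
  exists C : R, forall (vroot : V) (alpha zeta eps : R),
    0 < alpha < 1 ->
    0 < zeta -> zeta < (1 - alpha) / alpha * Pmin P ->
    0 < eps ->
    let delta := 1 - Scoll lab P - eps in
    (limn_esup (fun n : nat =>
        ((n%:R)^-1)%:E * elog2 (PEbad src tgt lab P vroot zeta delta n))
     <= - ereal_inf [set (2 * HP src P - HQ src Q)%:E | Q in A_set src tgt lab P zeta delta]
        + (C * zeta)%:E)%E.
Proof.
move=> _ _ [k connect_k] stat; exists (2 * surprisal src P).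
move=> vroot alpha zeta eps _ zeta_gt0 _ _; cbv zeta; set delta := 1 - _ - eps.
apply: (le_oppe_ereal_infD (f := fun Q => 2 * HP src P - HQ src Q)) => r r_le.
have HQ_le Q : A_set src tgt lab P zeta delta Q -> HQ src Q <= 2 * HP src P - r.
  by move=> /r_le; lra.
apply: le_trans (limn_esup_PEbad_le vroot stat connect_k zeta_gt0 HQ_le) _.
by rewrite lee_fin; lra.
Qed.
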